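(* Let $X$ be an infinite compact metrizable space, $h\colon X\to X$ a minimal homeomorphism, and suppose $(X,h)$ has the topological small boundary property. Let $\varepsilon>0$. Then for any closed $F\subset X$ and open $U\subset X$ with $F\subset U$, there exist a closed set $K\subset X$ and an open set $V\subset X$ with $F\subset K\subset V\subset\overline{V}\subset U$ and $\mu(V\setminus K)<\varepsilon$ for all $\mu\in M_h(X)$.
   Context: $M_h(X)$ denotes the set of $h$-invariant Borel probability measures on $X$. A closed set $F\subset X$ is topologically $h$-small if there is $m\in\mathbb{Z}_{+}$ such that whenever $d(0),\dots,d(m)$ are $m+1$ distinct integers, $h^{d(0)}(F)\cap\cdots\cap h^{d(m)}(F)=\varnothing$. $(X,h)$ has the topological small boundary property if whenever $F,K\subset X$ are disjoint compact sets, there exist open sets $U,V\subset X$ with $F\subset U$, $K\subset V$, $\overline{U}\cap\overline{V}=\varnothing$ and $\partial U$ (boundary of $U$) topologically $h$-small. *)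

From HB Require Import structures.
From mathcomp Require Import all_boot all_order all_algebra.
From mathcomp Require Import all_classical all_reals all_analysis.
Set Implicit Arguments. Unset Strict Implicit. Unset Printing Implicit Defensive.
Import Order.TTheory GRing.Theory Num.Theory.
Local Open Scope classical_set_scope.
Local Open Scope ring_scope.

Definition homeomorphism {X : topologicalType} (h : X -> X) : Prop :=
  exists g : X -> X, [/\ cancel h g, cancel g h, continuous h & continuous g].

Definition minimal_map {X : topologicalType} (h : X -> X) : Prop :=
  forall Y : set X, closed Y -> h @` Y = Y -> Y = set0 \/ Y = setT.

(* h^d(F) for d : int, for a bijection h: for d = n >= 0 the image under
   h^n, for d = -n < 0 the image under h^{-n}, i.e. the preimage under h^n. *)
Definition hpow_set {X : Type} (h : X -> X) (d : int) (F : set X) : set X :=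
  match d with
  | Posz n => iter n h @` F
  | Negz n => iter n.+1 h @^-1` F
  end.

Definition top_small {X : topologicalType} (h : X -> X) (F : set X) : Prop :=
  closed F /\
  exists m : nat, forall d : 'I_m.+1 -> int, injective d ->
    \bigcap_(i in [set: 'I_m.+1]) hpow_set h (d i) F = set0.

Definition boundary {X : topologicalType} (A : set X) : set X :=
  closure A `\` interior A.

Definition top_small_boundary_property {X : topologicalType} (h : X -> X) : Prop :=
  forall F K : set X, compact F -> compact K -> F `&` K = set0 ->
    exists U V : set X, [/\ open U /\ open V, F `<=` U, K `<=` V,
      closure U `&` closure V = set0 & top_small h (boundary U)].

Definition borel_type (X : ptopologicalType) := g_sigma_algebraType (@open X).

Definition h_invariant {X : ptopologicalType} {R : realType} (h : X -> X)
  (mu : probability (borel_type X) R) : Prop :=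
  forall A : set (borel_type X), measurable A -> mu (h @^-1` A) = mu A.

From HB Require Import structures.
From mathcomp Require Import all_boot all_order all_algebra.
From mathcomp Require Import all_classical all_reals all_analysis.
From mathcomp Require Import measurable_realfun.
Import Order.TTheory GRing.Theory Num.Theory.
Set Implicit Arguments. Unset Strict Implicit. Unset Printing Implicit Defensive.
Local Open Scope classical_set_scope.
Local Open Scope ring_scope.

(* Take an open U0 between F and U whose boundary B is topologically small with
   constant m, and K := closure U0.  Smallness means that no orbit segment
   h x, ..., h^N x meets B more than m times; by compactness the same holds
   for a small enough open neighbourhood W of B.  Summing the indicators of
   h^-j(W), j = 1..N, gives N mu(W) <= m for every invariant mu, so
   mu(W) < eps once N > m / eps.  Then V := U0 ∪ (W ∩ U1), with U1 a
   neighbourhood of closure U0 inside U, satisfies V \ K ⊆ W. *)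

Lemma borel_open_measurable (X : ptopologicalType) (A : set X) :
  open A -> measurable (A : set (borel_type X)).
Proof. by move=> oA; apply: sub_sigma_algebra. Qed.

Lemma continuous_iter (X : topologicalType) (h : X -> X) :
  continuous h -> forall k, continuous (iter k h).
Proof.
move=> hc k x; elim: k => [|k IH] /=; first exact: cvg_id.
exact: continuous_comp IH (hc _).
Qed.

Lemma probability_sum_le_multiplicity (R : realType) (X : ptopologicalType)
    (mu : probability (borel_type X) R) (N m : nat) (A : 'I_N -> set X) :
  (forall j, open (A j)) ->
  (forall y, #|[pred j : 'I_N | y \in A j]| <= m)%N ->
  (\sum_(j < N) mu (A j) <= m%:R%:E)%E.
Proof.
move=> oA cA.
have mA j : measurable (A j : set (borel_type X)) by exact: borel_open_measurable.
have mAi j : measurable_fun setT (fun x : borel_type X => (\1_(A j) x)%:E).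
  by apply/measurable_EFinP; exact: measurable_indic.
have -> : (\sum_(j < N) mu (A j) =
    \sum_(j < N) \int[mu]_(x in [set: borel_type X]) (\1_(A j) x)%:E)%E.
  by apply: eq_bigr => j _; rewrite integral_indic // setIT.
rewrite -ge0_integral_sum //.
apply: (@le_trans _ _ (\int[mu]_(x in [set: borel_type X]) (m%:R)%:E)%E).
  apply: ge0_le_integral => //.
  - by move=> x _; apply: sume_ge0 => j _; rewrite lee_fin.
  - exact: emeasurable_sum.
  move=> x _; rewrite sumEFin lee_fin.
  under eq_bigr do rewrite indicE.
  rewrite -natr_sum ler_nat; apply: leq_trans (cA x).
  rewrite -sum1_card [X in (_ <= X)%N]big_mkcond /=.
  apply: leq_sum => j _.
  by case: (boolP (x \in A j)) => // Ax; rewrite inE Ax.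
by rewrite integral_cst // [X in (_ * X)%E]probability_setT mule1.
Qed.

Lemma h_invariant_preimage_iter (R : realType) (X : ptopologicalType)
    (h : X -> X) (mu : probability (borel_type X) R) :
  continuous h -> h_invariant h mu ->
  forall k (A : set X), open A -> mu (iter k h @^-1` A) = mu A.
Proof.
move=> hc hinv; elim=> [//|k IH] A oA /=.
have oA' : open (h @^-1` A) by apply: open_comp => // x _; exact: hc.
by rewrite (IH _ oA') hinv //; exact: borel_open_measurable.
Qed.

Lemma top_small_visits_le (X : topologicalType) (h : X -> X) (B : set X)
    (m : nat) :
  (forall d : 'I_m.+1 -> int, injective d ->
    \bigcap_(i in [set: 'I_m.+1]) hpow_set h (d i) B = set0) ->
  forall N x, (#|[pred j : 'I_N | iter j.+1 h x \in B]| <= m)%N.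
Proof.
move=> smallB N x; rewrite leqNgt; apply/negP => visits.
set P := [pred j : 'I_N | iter j.+1 h x \in B] in visits.
(* iter j.+1 h x \in B says x \in hpow_set h (Negz j) B. *)
pose d (i : 'I_m.+1) : int := Negz (enum_val (A := P) (widen_ord visits i)).
have d_inj : injective d.
  move=> i1 i2 [] /val_inj /enum_val_inj E.
  by apply: val_inj; exact: (congr1 val E).
suff : (\bigcap_(i in [set: 'I_m.+1]) hpow_set h (d i) B) x.
  by rewrite (smallB d d_inj).
by move=> i _; have := enum_valP (A := P) (widen_ord visits i); rewrite inE.
Qed.

Definition thickening {R : realType} {X : pseudoPMetricType R} (B : set X)
  (n : nat) : set X := \bigcup_(b in B) ball b n.+1%:R^-1.

Lemma sub_interior_thickening (R : realType) (X : pseudoPMetricType R) (B : set X) n :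
  B `<=` (thickening B n)°.
Proof.
move=> b Bb; apply: filterS (nbhsx_ballx b n.+1%:R^-1 _); last by rewrite invr_gt0.
by move=> y by_; exists b.
Qed.

Lemma near_thickening_mem (R : realType) (X : pseudoPMetricType R)
    (f : X -> X) (B : set X) (x : X) :
  continuous f -> closed B ->
  filter_prod (nbhs x) (nbhs (\oo : set_system nat))
    (fun p => thickening B p.2 (f p.1) -> B (f x)).
Proof.
move=> fc cB; have [Bfx|nBfx] := pselect (B (f x)); first exact: filterE.
have /nbhs_ballP [r /= r0 rB] : \forall y \near f x, ~ B y.
  by move: cB => /closed_openC; rewrite openE; apply.
have r20 : 0 < r / 2 by rewrite divr_gt0.
exists ([set x' | ball (f x) (r / 2) (f x')], [set i : nat | i.+1%:R^-1 < r / 2]).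
  split; first exact: fc x _ (nbhsx_ballx _ _ r20).
  exact: near_infty_natSinv_lt (PosNum r20).
move=> [x' i] /= [fx'_near i_large] [b Bb b_near]; exfalso.
apply: (rB b) => //; apply: (@le_ball _ _ _ (r / 2 + i.+1%:R^-1)).
  by rewrite [leRHS](splitr r) lerD2l ltW.
exact: ball_triangle fx'_near (ball_sym b_near).
Qed.

Lemma thickening_multiplicity (R : realType) (X : pseudoPMetricType R)
    (N m : nat) (f : 'I_N -> X -> X) (B : set X) :
  compact [set: X] -> (forall j, continuous (f j)) -> closed B ->
  (forall x, #|[pred j | f j x \in B]| <= m)%N ->
  exists n, forall x, (#|[pred j | f j x \in thickening B n]| <= m)%N.
Proof.
move=> /compact_near_coveringP cover fc cB visits.
have [x _|n _ mult] := cover nat \oo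
  (fun n x => #|[pred j | f j x \in thickening B n]| <= m)%N; last first.
  by exists n => x; exact: mult n (leqnn n) x I.
have prod_filter : Filter (filter_prod (nbhs x) (nbhs (\oo : set_system nat))).
  exact: filter_prod_filter.
have := filter_forall prod_filter (fun j => near_thickening_mem x (fc j) cB).
rewrite /prop_near2; apply: filterS => -[x' i] /= mem.
apply: leq_trans (visits x); apply/subset_leq_card/fintype.subsetP => j.
by rewrite !inE; exact: mem.
Qed.

Lemma lte_of_natmul_le (R : realType) (x : \bar R) (N m : nat) (eps : R) :
  0 < eps -> m%:R / eps < N%:R -> (0 <= x)%E -> (x *+ N <= m%:R%:E)%E ->
  (x < eps%:E)%E.
Proof.
move=> eps0 Nbig; have N_gt0 : 0 < N%:R :> R.
  by apply: le_lt_trans _ Nbig; rewrite divr_ge0 // ltW.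
case: x => [c||] //= _; last first.
  by case: N N_gt0 {Nbig} => [|n]; rewrite ?ltxx // enatmul_pinfty leye_eq.
rewrite -[X in (X <= _)%E]EFin_natmul lee_fin lte_fin -[c *+ N]mulr_natl => Nc_le.
rewrite -(ltr_pM2l N_gt0); apply: le_lt_trans Nc_le _.
by rewrite -ltr_pdivrMr.
Qed.

Lemma top_small_invariant_nbhd (R : realType) (X : pseudoPMetricType R)
    (h : X -> X) (B : set X) (eps : R) :
  compact [set: X] -> continuous h -> top_small h B -> 0 < eps ->
  exists O : set X, [/\ open O, B `<=` O &
    forall mu : probability (borel_type X) R, h_invariant h mu ->
      (mu O < eps%:E)%E].
Proof.
move=> cpt hc [cB [m smallB]] eps0.
pose N := (Num.truncn (m%:R / eps)).+1.
have iter_cont (j : 'I_N) : continuous (iter j.+1 h) by exact: continuous_iter.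
have [n thick_visits] := thickening_multiplicity cpt iter_cont cB
  (top_small_visits_le smallB N).
pose O := (thickening B n)°.
have oO : open O by exact: open_interior.
exists O; split => // [|mu hinv]; first exact: sub_interior_thickening.
have oOj (j : 'I_N) : open (iter j.+1 h @^-1` O).
  by apply: open_comp oO => x _; exact: iter_cont.
have O_visits y : (#|[pred j : 'I_N | y \in iter j.+1 h @^-1` O]| <= m)%N.
  apply: leq_trans (thick_visits y).
  apply/subset_leq_card/fintype.subsetP => j; rewrite !inE.
  exact: interior_subset.
have := probability_sum_le_multiplicity mu oOj O_visits.
under eq_bigr do rewrite (h_invariant_preimage_iter hc hinv _ oO).
rewrite sumr_const card_ord.
by apply: lte_of_natmul_le => //; exact: (truncnS_gt (m%:R / eps)).
Qed.

Lemma small_boundary_nbhd (X : topologicalType) (h : X -> X) (A U : set X) :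
  compact [set: X] -> top_small_boundary_property h ->
  closed A -> open U -> A `<=` U ->
  exists W : set X,
    [/\ open W, A `<=` W, closure W `<=` U & top_small h (boundary W)].
Proof.
move=> cpt tsbp cA oU AU.
have AUc : A `&` ~` U = set0 by apply/disjoints_subset; rewrite setCK.
have [W [W' [[oW _] AW UcW' disj small]]] := tsbp _ _
  (subclosed_compact cA cpt (subsetT _))
  (subclosed_compact (open_closedC oU) cpt (subsetT _)) AUc.
exists W; split => // x clWx; apply: contrapT => Ux.
have : (closure W `&` closure W') x by split => //; exact/subset_closure/UcW'.
by rewrite disj.
Qed.

Theorem lemma4p8 (R : realType) (X : pseudoPMetricType R) (h : X -> X)
  (eps : R) :
  hausdorff_space X -> compact [set: X] -> infinite_set [set: X] ->
  homeomorphism h -> minimal_map h -> top_small_boundary_property h ->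
  0 < eps ->
  forall F U : set X, closed F -> open U -> F `<=` U ->
  exists K V : set X, [/\ closed K /\ open V, F `<=` K, K `<=` V,
    closure V `<=` U &
    forall mu : probability (borel_type X) R, h_invariant h mu ->
      (mu (V `\` K) < eps%:E)%E].
Proof.
move=> _ cpt _ [_ [_ _ hc _]] _ tsbp eps0 F U cF oU FU.
have [U0 [oU0 FU0 clU0U smallB]] := small_boundary_nbhd cpt tsbp cF oU FU.
have [U1 [oU1 clU0U1 clU1U _]] :=
  small_boundary_nbhd cpt tsbp (@closed_closure _ U0) oU clU0U.
have [W [oW BW muW]] := top_small_invariant_nbhd cpt hc smallB eps0.
have oV : open (U0 `|` (W `&` U1)) by apply: openU => //; exact: openI.
exists (closure U0), (U0 `|` (W `&` U1)); split.
- by split; first exact: closed_closure.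
- exact: subset_trans FU0 (@subset_closure _ U0).
- move=> x clU0x; have [U0x|nU0x] := pselect (U0 x); [by left | right].
  by split; [apply: BW; split => // /interior_subset | exact: clU0U1].
- apply: subset_trans clU1U; apply: closureS => x [U0x|[_ //]].
  exact/clU0U1/subset_closure.
move=> mu hinv; apply: le_lt_trans (muW mu hinv).
apply: le_measure; rewrite ?inE; try exact: borel_open_measurable.
- apply: borel_open_measurable; rewrite setDE; apply: openI => //.
  exact/closed_openC/closed_closure.
- by move=> x [[U0x|[Wx _]] nclx] //; exfalso; exact/nclx/subset_closure.
Qed.
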